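(* In every strategic game (in the setting described in the context, with equivalent priors) with imperfect information, Assumption BAY is violated.
   Context: Setting: there are $n\ge 2$ players and a measurable space $(\Omega,\mathcal{F})$. Each player $i$ has a prior $p_i$ on $\mathcal{F}$, an action set $A_i\subseteq\mathbb{R}$ with $|A_i|>1$, and a finite private information partition $\mathcal{I}_i$ of $\Omega$ into nonempty measurable events; the coarsest common refinement of the $\mathcal{I}_i$ is measurable. The priors are equivalent: $p_i(F)=0$ iff $p_j(F)=0$ for all $F\in\mathcal{F}$, $i,j$. Events of positive probability are called substantial, those of probability zero null. A strategy of player $i$ is a $\sigma(\mathcal{I}_i)$-measurable function $s_i:\Omega\to A_i$, and each player may choose any such function. Let $s^i$ be the tuple of the actual strategies of the other players. For each substantial $I_i\in\mathcal{I}_i$ and action $a_i\in A_i$ chosen on $I_i$, player $i$ has a conjecture $\psi_i(I_i,a_i)$ about the other players' strategies, unique up to $p_i(\cdot\mid I_i)$-null events. Player $i$ has imperfect information if there exist a substantial $I_i\in\mathcal{I}_i$, a player $j\neq i$ and $I_j\in\mathcal{I}_j$ with $0<p_i(I_j\mid I_i)<1$; the game has imperfect information if some player does. Assumption BAY: for every player $i$, each substantial $I_i\in\mathcal{I}_i$ and each $a_i\in A_i$, $\psi_i(I_i,a_i)=s^i$ except on $p_i(\cdot\mid I_i)$-null events, where $s^i$ is the true response of the others; i.e., each player's action on a substantial information cell uniquely and correctly determines the other players' strategies up to null events. *)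

From HB Require Import structures.
From mathcomp Require Import all_boot all_order all_algebra.
From mathcomp Require Import all_classical all_reals.
From mathcomp Require Import ereal measure probability.
Set Implicit Arguments. Unset Strict Implicit. Unset Printing Implicit Defensive.
Import Order.TTheory GRing.Theory Num.Theory.
Local Open Scope classical_set_scope.
Local Open Scope ring_scope.

Section Game.
Context {R : realType} {d : measure_display} {T : measurableType d} {n : nat}.

(* Conditional probability p(F | B) (as a real number); only used for
   substantial B, i.e. p B > 0. *)
Definition cond_prob (p : probability T R) (B F : set T) : R :=
  fine (p (F `&` B)) / fine (p B).

Definition finite_partition (P : set (set T)) : Prop :=
  [/\ finite_set P,
      (forall C, P C -> measurable C /\ C !=set0),
      (forall C D, P C -> P D -> C `&` D !=set0 -> C = D) &
      (forall w, exists C, P C /\ C w)].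

Definition equivalent_priors (p : 'I_n -> probability T R) : Prop :=
  forall (F : set T) (i j : 'I_n), measurable F -> (p i F = 0%E <-> p j F = 0%E).

Definition substantial (p : probability T R) (B : set T) : Prop := (0 < p B)%E.

(* A strategy: a sigma(P)-measurable function into the action set A; since P is
   a finite partition this means: A-valued and constant on every cell of P. *)
Definition is_strategy (P : set (set T)) (A : set R) (s : T -> R) : Prop :=
  (forall w, A (s w)) /\ (forall C, P C -> forall x y, C x -> C y -> s x = s y).

Definition player_imperfect_info (p : 'I_n -> probability T R)
    (P : 'I_n -> set (set T)) (i : 'I_n) : Prop :=
  exists Ii, P i Ii /\ substantial (p i) Ii /\
  exists j : 'I_n, j != i /\ exists Ij, P j Ij /\
    0 < cond_prob (p i) Ii Ij /\ cond_prob (p i) Ii Ij < 1.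

Definition imperfect_info (p : 'I_n -> probability T R)
    (P : 'I_n -> set (set T)) : Prop :=
  exists i, player_imperfect_info p P i.

Definition ae_eq_cond (p : probability T R) (B : set T) (f g : T -> R) : Prop :=
  exists N, measurable N /\ cond_prob p B N = 0 /\
    (forall w, B w -> ~ N w -> f w = g w).

(* Conjectures: psi i Ii ai is a tuple (indexed by the players j <> i) of
   strategies of the other players. *)
Definition conjectures_are_strategies (P : 'I_n -> set (set T)) (A : 'I_n -> set R)
    (psi : 'I_n -> set T -> R -> 'I_n -> T -> R) : Prop :=
  forall i Ii ai j, P i Ii -> A i ai -> j != i -> is_strategy (P j) (A j) (psi i Ii ai j).

Definition profiles_are_strategies (P : 'I_n -> set (set T)) (A : 'I_n -> set R)
    (S : set ('I_n -> T -> R)) : Prop :=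
  forall s, S s -> forall j, is_strategy (P j) (A j) (s j).

Definition free_choice (P : 'I_n -> set (set T)) (A : 'I_n -> set R)
    (S : set ('I_n -> T -> R)) : Prop :=
  forall i si, is_strategy (P i) (A i) si -> exists s, S s /\ s i = si.

Definition BAY (p : 'I_n -> probability T R) (P : 'I_n -> set (set T))
    (A : 'I_n -> set R) (psi : 'I_n -> set T -> R -> 'I_n -> T -> R)
    (S : set ('I_n -> T -> R)) : Prop :=
  forall s, S s -> forall i Ii, P i Ii -> substantial (p i) Ii ->
  forall ai, A i ai -> (forall w, Ii w -> s i w = ai) ->
  forall j, j != i -> ae_eq_cond (p i) Ii (psi i Ii ai j) (s j).

End Game.

From HB Require Import structures.
From mathcomp Require Import all_boot all_order all_algebra.
From mathcomp Require Import all_classical all_reals.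
From mathcomp Require Import ereal measure probability.
Local Open Scope classical_set_scope.
Local Open Scope ring_scope.
Import Order.TTheory GRing.Theory Num.Theory.

(* Let player i, on a substantial cell Ii, be uncertain about the cell Ij of
   player j. Player j may play the constant action a, or play b on Ij and a
   elsewhere; call the resulting profiles s1 and s2. If i answers both with
   the same action on Ii, BAY makes psi_i predict both strategies of j on Ii,
   yet they differ on Ij, which has positive conditional probability. If i
   answers with different actions, pick a cell C of j outside Ij that meets Ii
   with positive probability (it exists since p_i(Ij | Ii) < 1): j plays a on C
   in both profiles, so BAY makes psi_j predict both strategies of i on C,
   which differ on Ii; equivalence of the priors makes this disagreement
   substantial for j. *)

Section ConditionalProbability.
Context {R : realType} {d : measure_display} {T : measurableType d}.
Context {p : probability T R}.

Lemma probability_fineK {X : set T} : measurable X -> (fine (p X))%:E = p X.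
Proof. by move=> mX; rewrite fineK // fin_num_measure. Qed.

Lemma substantial_fine_gt0 {B : set T} :
  measurable B -> substantial p B -> 0 < fine (p B).
Proof. by move=> mB pB; rewrite -lte_fin probability_fineK. Qed.

Lemma substantialIr {X Y : set T} : measurable X -> measurable Y ->
  substantial p (X `&` Y) -> substantial p Y.
Proof. by move=> mX mY pXY; apply: lt_le_trans pXY (measureIr _ mX mY). Qed.

Lemma cond_prob_gt0 {B F : set T} :
  0 < cond_prob p B F -> substantial p (F `&` B).
Proof.
rewrite /substantial measure_gt0; apply: contraTneq => pFB0.
by rewrite /cond_prob pFB0 /= mul0r ltxx.
Qed.

Lemma cond_prob_lt1 {B F : set T} : measurable B -> measurable F ->
  substantial p B -> cond_prob p B F < 1 -> substantial p (B `\` F).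
Proof.
move=> mB mF pB; rewrite /substantial measure_gt0; apply: contraTneq => pBF0.
have pFB : p (F `&` B) = p B by rewrite setIC [RHS](measureDI p mB mF) pBF0 add0e.
by rewrite /cond_prob pFB divff ?ltxx // gt_eqF // substantial_fine_gt0.
Qed.

Lemma cond_prob_eq0 {B F : set T} : measurable B -> measurable F ->
  substantial p B -> cond_prob p B F = 0 -> p (F `&` B) = 0%E.
Proof.
move=> mB mF pB /eqP; rewrite /cond_prob mulf_eq0 invr_eq0.
rewrite (gt_eqF (substantial_fine_gt0 mB pB)) orbF.
by move=> /eqP fine0; rewrite -(probability_fineK (measurableI _ _ mF mB)) fine0.
Qed.

Lemma ae_eq_cond_disagreement0 {B E : set T} {f g h : T -> R} :
  measurable B -> substantial p B -> measurable E ->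
  ae_eq_cond p B f g -> ae_eq_cond p B f h ->
  (forall w, E w -> B w -> g w <> h w) -> p (E `&` B) = 0%E.
Proof.
move=> mB pB mE [N1 [mN1 [N1_0 fg]]] [N2 [mN2 [N2_0 fh]]] gh.
have sub : E `&` B `<=` (N1 `&` B) `|` (N2 `&` B).
  move=> w [Ew Bw]; have [N1w|nN1w] := pselect (N1 w); first by left.
  have [N2w|nN2w] := pselect (N2 w); first by right.
  by have := gh w Ew Bw; rewrite -fg // -fh.
have le : (p (E `&` B) <= p (N1 `&` B) + p (N2 `&` B))%E.
  apply: le_trans (le_measure _ _ _ sub) (measureU2 _ _ _); rewrite ?inE;
    by [apply: measurableI|apply: measurableU; apply: measurableI].
apply/eqP; rewrite -measure_le0.
by rewrite (cond_prob_eq0 mB mN1 pB N1_0) (cond_prob_eq0 mB mN2 pB N2_0) adde0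
  in le.
Qed.

End ConditionalProbability.

Section Partitions.
Context {R : realType} {d : measure_display} {T : measurableType d}.

Lemma partition_cell_gt0 {mu : {measure set T -> \bar R}} {Q : set (set T)}
    {D : set T} :
  finite_partition Q -> measurable D -> (0 < mu D)%E ->
  exists2 C, Q C & (0 < mu (C `&` D))%E.
Proof.
move=> [finQ mQ _ coverQ] mD muD; apply: contrapT => noC.
have null C : Q C -> mu (C `&` D) = 0%E.
  move=> QC; apply/eqP; rewrite -measure_le0 leNgt; apply/negP => pos.
  by apply: noC; exists C.
suff : (mu D <= \sum_(C \in Q) mu (C `&` D))%E.
  by rewrite fsbig1 // leNgt muD.
apply: content_sub_fsum => // [C QC|w Dw].
  by apply: measurableI => //; exact: (mQ C QC).1.
by have [C [QC Cw]] := coverQ w; exists C.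
Qed.

Lemma partition_cells_disjoint {Q : set (set T)} {C D : set T} {w : T} :
  finite_partition Q -> Q C -> Q D -> C <> D -> C w -> ~ D w.
Proof.
by move=> [_ _ disjQ _] QC QD CD Cw Dw; apply/CD/disjQ => //; exists w.
Qed.

Lemma partition_cell_outside_gt0 {mu : {measure set T -> \bar R}}
    {Q : set (set T)} {I B : set T} :
  finite_partition Q -> Q I -> measurable B -> measurable I ->
  (0 < mu (B `\` I))%E ->
  exists2 C, Q C & (forall w, C w -> ~ I w) /\ (0 < mu (B `&` C))%E.
Proof.
move=> hQ QI mB mI muBI; have [_ cellsQ _ _] := hQ.
have [C QC muCBI] := partition_cell_gt0 hQ (measurableD mB mI) muBI.
have CI : C <> I by move=> CI; move: muCBI; rewrite CI setDIK measure0 ltxx.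
exists C => //; split=> [w|]; first exact: partition_cells_disjoint hQ QC QI CI.
apply: lt_le_trans muCBI _; rewrite le_measure ?inE //.
- by apply: measurableI; [exact: (cellsQ C QC).1|exact: measurableD].
- by apply: measurableI; [|exact: (cellsQ C QC).1].
- by move=> w [Cw [Bw _]].
Qed.

Context {Q : set (set T)} {A : set R}.

Lemma is_strategy_cst {a : R} : A a -> is_strategy Q A (cst a).
Proof. by []. Qed.

Definition switch_on (I : set T) (a b : R) : T -> R :=
  fun w => if `[< I w >] then b else a.

Lemma is_strategy_switch_on {I : set T} {a b : R} :
  finite_partition Q -> Q I -> A a -> A b -> is_strategy Q A (switch_on I a b).
Proof.
move=> hQ QI Aa Ab; split=> [w|C QC x y Cx Cy].
  by rewrite /switch_on; case: asboolP.
rewrite /switch_on; have [<-|CI] := pselect (C = I); first by rewrite !asboolT.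
by rewrite !asboolF //; exact: partition_cells_disjoint hQ QC QI CI _.
Qed.

End Partitions.

Section Bayesianism.
Context {R : realType} {d : measure_display} {T : measurableType d} {n : nat}.
Context {p : 'I_n -> probability T R} {P : 'I_n -> set (set T)}.
Context {A : 'I_n -> set R} {psi : 'I_n -> set T -> R -> 'I_n -> T -> R}.
Context {S : set ('I_n -> T -> R)}.

Lemma equivalent_priors_substantial {i j : 'I_n} {F : set T} :
  equivalent_priors p -> measurable F ->
  substantial (p i) F -> substantial (p j) F.
Proof.
move=> heq mF; rewrite /substantial !measure_gt0.
by apply: contra => /eqP /(heq F i j mF).2 /eqP.
Qed.

Lemma BAY_disagreement_null {s1 s2 : 'I_n -> T -> R} {i j : 'I_n} {Ii E : set T}
    {ai : R} :
  BAY p P A psi S -> S s1 -> S s2 -> P i Ii -> measurable Ii ->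
  substantial (p i) Ii -> A i ai ->
  (forall w, Ii w -> s1 i w = ai) -> (forall w, Ii w -> s2 i w = ai) ->
  j != i -> measurable E -> (forall w, E w -> Ii w -> s1 j w <> s2 j w) ->
  ~ substantial (p i) (E `&` Ii).
Proof.
move=> hBAY Ss1 Ss2 PIi mIi pIi Aai s1i s2i ji mE s12j.
have psi_s1 := hBAY _ Ss1 _ _ PIi pIi _ Aai s1i _ ji.
have psi_s2 := hBAY _ Ss2 _ _ PIi pIi _ Aai s2i _ ji.
have := ae_eq_cond_disagreement0 mIi pIi mE psi_s1 psi_s2 s12j.
by rewrite /substantial => ->; rewrite ltxx.
Qed.

End Bayesianism.

Theorem theorem2 (R : realType) (d : measure_display) (T : measurableType d)
  (n : nat) (hn : (2 <= n)%N)
  (p : 'I_n -> probability T R) (A : 'I_n -> set R) (P : 'I_n -> set (set T))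
  (psi : 'I_n -> set T -> R -> 'I_n -> T -> R) (S : set ('I_n -> T -> R)) :
  (forall i, exists x y, A i x /\ A i y /\ x <> y) ->
  (forall i, finite_partition (P i)) ->
  equivalent_priors p ->
  imperfect_info p P ->
  conjectures_are_strategies P A psi ->
  profiles_are_strategies P A S ->
  free_choice P A S ->
  ~ BAY p P A psi S.
Proof.
move=> hA hP heq [i [Ii [PIi [pIi [j [ji [Ij [PIj [Ij_gt0 Ij_lt1]]]]]]]]] _
  hS hfree hBAY.
have [_ cellsPi _ _] := hP i; have [_ cellsPj _ _] := hP j.
have [mIi [w0 Iiw0]] := cellsPi Ii PIi; have mIj := (cellsPj Ij PIj).1.
have [a [b [Aa [Ab ab]]]] := hA j.
have [s1 [Ss1 s1j]] := hfree j _ (is_strategy_cst Aa).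
have [s2 [Ss2 s2j]] := hfree j _ (is_strategy_switch_on (hP j) PIj Aa Ab).
have [[_ cs1] [As2 cs2]] := (hS s1 Ss1 i, hS s2 Ss2 i).
have s1i w : Ii w -> s1 i w = s1 i w0.
  by move=> Iiw; exact: cs1 _ PIi _ _ Iiw Iiw0.
have s2i w : Ii w -> s2 i w = s2 i w0.
  by move=> Iiw; exact: cs2 _ PIi _ _ Iiw Iiw0.
have [same|differ] := pselect (s1 i w0 = s2 i w0).
  rewrite same in s1i.
  apply: (BAY_disagreement_null hBAY Ss1 Ss2 PIi mIi pIi (As2 w0) s1i s2i ji mIj
    _ (cond_prob_gt0 Ij_gt0)).
  by move=> w Ijw _; rewrite s1j s2j /switch_on asboolT.
have [C PC [CIj pIiC]] := partition_cell_outside_gt0 (hP j) PIj mIi mIj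
  (cond_prob_lt1 mIi mIj pIi Ij_lt1).
have mC := (cellsPj C PC).1.
have pjIiC : substantial (p j) (Ii `&` C) :=
  equivalent_priors_substantial heq (measurableI _ _ mIi mC) pIiC.
rewrite eq_sym in ji.
apply: (BAY_disagreement_null hBAY Ss1 Ss2 PC mC (substantialIr mIi mC pjIiC) Aa
  _ _ ji mIi _ pjIiC).
- by move=> w _; rewrite s1j.
- by move=> w Cw; rewrite s2j /switch_on asboolF //; exact: CIj.
- by move=> w Iiw _; rewrite s1i // s2i.
Qed.
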